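(* Let $H$ be a connected graph of order $a \in \mathbb{N}$. Then for every integer $b \ge 2$, $R_\mathrm{cyc}(H, C_b^\mathrm{mon}) \ge 1 + (a-1)(b-1)$.
   Context: All graphs are finite, simple and undirected, and a graph of order $n$ has vertex set $\{0,1,\ldots,n-1\}$; $K_n$ is the complete graph on $\{0,\ldots,n-1\}$. A $2$-edge-coloring of $K_n$ assigns each edge a color in $\{1,2\}$. For a graph $H$ and such a coloring, an embedding of $H$ in color $j$ is an injective map $\varphi\colon V(H)\to V(K_n)$ such that for every edge $uv$ of $H$ the edge $\{\varphi(u),\varphi(v)\}$ has color $j$; it is increasing up to a cyclic permutation if there exists $t\in V(H)$ such that $(\varphi(t),\ldots,\varphi(|H|-1),\varphi(0),\ldots,\varphi(t-1))$ is increasing. The cyclic Ramsey number $R_\mathrm{cyc}(H_1,H_2)$ is the smallest $n$ such that every $2$-edge-coloring of $K_n$ admits an embedding of $H_1$ in color $1$ or of $H_2$ in color $2$ that is increasing up to a cyclic permutation. For $n\ge 3$, the monotone cycle $C_n^\mathrm{mon}$ is the graph of order $n$ with edges $\{i,i+1\}$ for $0\le i\le n-2$ together with $\{0,n-1\}$; by convention $C_2^\mathrm{mon}=K_2$. *)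

From mathcomp Require Import all_boot.
Set Implicit Arguments. Unset Strict Implicit. Unset Printing Implicit Defensive.

Definition simple_graph (n : nat) (G : rel 'I_n) : Prop :=
  symmetric G /\ irreflexive G.

Definition connected_graph (n : nat) (G : rel 'I_n) : Prop :=
  forall x y : 'I_n, connect G x y.

(* A 2-edge-colouring of K_n: a symmetric colour function with values in {1,2}
   (the diagonal values are irrelevant: they are never used). *)
Definition two_coloring (n : nat) (c : 'I_n -> 'I_n -> nat) : Prop :=
  (forall x y, c x y = c y x) /\ (forall x y, c x y = 1 \/ c x y = 2).

Definition embedding_in_color (a n : nat) (H : rel 'I_a)
    (c : 'I_n -> 'I_n -> nat) (j : nat) (phi : 'I_a -> 'I_n) : Prop :=
  injective phi /\ (forall u v, H u v -> c (phi u) (phi v) = j).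

(* phi is increasing up to a cyclic permutation: for some t in V(H),
   (phi t, ..., phi (a-1), phi 0, ..., phi (t-1)) is increasing. *)
Definition cyc_increasing (a n : nat) (phi : 'I_a -> 'I_n) : Prop :=
  exists t : 'I_a,
    sorted ltn [seq val (phi i) | i <- rot t (enum 'I_a)].

(* The monotone cycle C_b^mon (for b = 2 this is K_2). *)
Definition Cmon (b : nat) : rel 'I_b :=
  fun i j => (i != j) &&
    [|| val j == (val i).+1, val i == (val j).+1,
        (val i == 0) && (val j == b.-1) | (val j == 0) && (val i == b.-1)].

Arguments Cmon : clear implicits.

Definition cyc_ramsey_prop (a1 a2 : nat) (H1 : rel 'I_a1) (H2 : rel 'I_a2)
    (n : nat) : Prop :=
  forall c : 'I_n -> 'I_n -> nat, two_coloring c ->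
    (exists phi, embedding_in_color H1 c 1 phi /\ cyc_increasing phi) \/
    (exists phi, embedding_in_color H2 c 2 phi /\ cyc_increasing phi).

(* R_cyc(H1,H2) >= m, where R_cyc is the least n with the property
   (or infinity if none exists). *)
Definition Rcyc_ge (a1 a2 : nat) (H1 : rel 'I_a1) (H2 : rel 'I_a2) (m : nat)
  : Prop :=
  forall n, cyc_ramsey_prop H1 H2 n -> m <= n.

From mathcomp Require Import all_boot.
From mathcomp Require Import zify.

Set Implicit Arguments.
Unset Strict Implicit.
Unset Printing Implicit Defensive.

(* Split the vertices of K_n into consecutive blocks of a - 1 vertices and give
   an edge colour 1 iff its ends lie in the same block; for n <= (a-1)(b-1)
   there are at most b - 1 blocks.  A colour-1 copy of the connected graph H
   lies inside one block, which cannot hold its a vertices.  A colour-2 copy of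
   C_b^mon, read in its increasing cyclic order, steps from each block to a
   strictly later one, so its b vertices would need b blocks. *)

Definition block_coloring (d n : nat) (x y : 'I_n) : nat :=
  if x %/ d == y %/ d then 1 else 2.

Arguments block_coloring : clear implicits.

Lemma block_coloring_two_coloring d n : two_coloring (block_coloring d n).
Proof.
split=> x y; rewrite /block_coloring; first by rewrite eq_sym.
by case: ifP; [left | right].
Qed.

Lemma block_coloring_eq1 d n (x y : 'I_n) :
  (block_coloring d n x y == 1) = (x %/ d == y %/ d).
Proof. by rewrite /block_coloring; case: ifP. Qed.

Lemma block_coloring_eq2 d n (x y : 'I_n) :
  (block_coloring d n x y == 2) = (x %/ d != y %/ d).
Proof. by rewrite /block_coloring; case: ifP. Qed.

Lemma connected_graph_constant a (H : rel 'I_a) (T : eqType) (f : 'I_a -> T) :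
  connected_graph H -> (forall u v, H u v -> f u = f v) ->
  forall u v, f u = f v.
Proof.
move=> H_conn f_edge u v.
have f_closed : closed H [pred w | f w == f u].
  by move=> x y /f_edge; rewrite !inE => ->.
have := closed_connect f_closed (H_conn u v).
by rewrite !inE eqxx => /esym/eqP.
Qed.

Lemma injective_same_quotient_leq a d (f : 'I_a -> nat) :
  0 < d -> injective f -> (forall u v, f u %/ d = f v %/ d) -> a <= d.
Proof.
move=> d_gt0 f_inj f_quo.
pose rem u : 'I_d := Ordinal (ltn_pmod (f u) d_gt0).
have rem_inj : injective rem.
  move=> u v /(congr1 val) /= eq_rem; apply: f_inj.
  by rewrite (divn_eq (f u) d) (divn_eq (f v) d) eq_rem (f_quo u v).
by have := leq_card rem rem_inj; rewrite !card_ord.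
Qed.

Lemma sorted_block_changes_size d k (s : seq nat) :
  0 < d -> sorted ltn s -> sorted [rel x y | x %/ d != y %/ d] s ->
  all (fun x => x < d * k) s -> size s <= k.
Proof.
move=> d_gt0 s_lt s_blocks /allP s_small.
have quo_sorted : sorted ltn [seq x %/ d | x <- s].
  have s_both : sorted [rel x y | (x < y) && (x %/ d != y %/ d)] s.
    by rewrite sorted_relI s_lt.
  rewrite sorted_map; apply: sub_sorted s_both => x y /= /andP[/ltnW x_le_y].
  by rewrite ltn_neqAle leq_div2r // andbT.
have quo_sub : {subset [seq x %/ d | x <- s] <= iota 0 k}.
  move=> _ /mapP[x /s_small x_small ->].
  by rewrite mem_iota add0n ltn_divLR // mulnC.
have := uniq_leq_size (sorted_uniq ltn_trans ltnn quo_sorted) quo_sub.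
by rewrite size_map size_iota.
Qed.

Lemma cycle_sorted (T : Type) (e : rel T) (s : seq T) : cycle e s -> sorted e s.
Proof. by case: s => //= x p; rewrite rcons_path => /andP[]. Qed.

Lemma path_iota_succ k m : path (fun x y => y == x.+1) k (iota k.+1 m).
Proof. by elim: m k => //= m IHm k; rewrite eqxx IHm. Qed.

Lemma cycle_iota_succ_or_wrap n :
  cycle (fun x y => (y == x.+1) || (x == n.-1) && (y == 0)) (iota 0 n).
Proof.
case: n => // m.
rewrite (cycle_path 0) -nth_last size_iota nth_iota //= add0n !eqxx /=.
by apply: sub_path (path_iota_succ 0 m) => x y ->.
Qed.

Lemma Cmon_cycle b : 1 < b -> cycle (Cmon b) (enum 'I_b).
Proof.
move=> b_gt1.
have := cycle_iota_succ_or_wrap b; rewrite -val_enum_ord cycle_map.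
apply: sub_cycle => i j /orP[/eqP j_succ | /andP[/eqP i_last /eqP j_0]];
  rewrite /Cmon -val_eqE.
- by rewrite j_succ eqxx neq_ltn ltnSn.
- by rewrite i_last j_0 !eqxx !orbT andbT -lt0n -ltnS prednK // ltnW.
Qed.

Lemma block_coloring_color1_connected a d n (H : rel 'I_a)
    (phi : 'I_a -> 'I_n) :
  0 < d -> connected_graph H ->
  embedding_in_color H (block_coloring d n) 1 phi -> a <= d.
Proof.
move=> d_gt0 H_conn [phi_inj phi_col].
have same_block : forall u v, phi u %/ d = phi v %/ d.
  apply: connected_graph_constant H_conn _ => u v /phi_col/eqP.
  by rewrite block_coloring_eq1 => /eqP.
exact: injective_same_quotient_leq d_gt0 (inj_comp val_inj phi_inj) same_block.
Qed.

Lemma block_coloring_color2_Cmon b d n k (phi : 'I_b -> 'I_n) :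
  1 < b -> n <= d * k ->
  embedding_in_color (Cmon b) (block_coloring d n) 2 phi ->
  cyc_increasing phi -> b <= k.
Proof.
move=> b_gt1 n_small [_ phi_col] [t phi_sorted].
have d_gt0 : 0 < d by have := ltn_ord (phi t); case: (d) n_small => //; lia.
have Cmon_sorted : sorted (Cmon b) (rot t (enum 'I_b)).
  by apply: cycle_sorted; rewrite rot_cycle Cmon_cycle.
have block_changes : sorted [rel x y | x %/ d != y %/ d]
                       [seq val (phi i) | i <- rot t (enum 'I_b)].
  rewrite sorted_map; apply: sub_sorted Cmon_sorted => i j /phi_col/eqP.
  by rewrite block_coloring_eq2.
have few_blocks : all (fun x => x < d * k)
                    [seq val (phi i) | i <- rot t (enum 'I_b)].
  by apply/allP => _ /mapP[i _ ->]; exact: leq_trans (ltn_ord _) n_small.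
have := sorted_block_changes_size d_gt0 phi_sorted block_changes few_blocks.
by rewrite size_map size_rot size_enum_ord.
Qed.

Theorem theorem4p6 (a : nat) (H : rel 'I_a) :
  simple_graph H -> connected_graph H ->
  forall b : nat, 2 <= b -> Rcyc_ge H (Cmon b) (1 + (a - 1) * (b - 1)).
Proof.
move=> _ H_conn b b_ge2 n n_ramsey; rewrite leqNgt; apply/negP => n_small.
have {}n_small : n <= (a - 1) * (b - 1) by lia.
case: (n_ramsey _ (block_coloring_two_coloring (a - 1) n)).
- move=> [phi [phi_emb [t _]]].
  have d_gt0 : 0 < a - 1 by have := ltn_ord (phi t); lia.
  have := block_coloring_color1_connected d_gt0 H_conn phi_emb.
  by have := ltn_ord t; lia.
- move=> [phi [phi_emb phi_incr]].
  have := block_coloring_color2_Cmon b_ge2 n_small phi_emb phi_incr.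
  lia.
Qed.
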